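(* Let $\Gamma_1=(u\xrightarrow{p}x\xrightarrow{q}v)$ be a path of length $2$ in $B(\mathfrak S_n)$, and let $\Gamma_2=(u\xrightarrow{s}y\xrightarrow{t}v)$ be the flip of $\Gamma_1$. Then: (1) if $p$ and $q$ commute, then $s=q$ and $t=p$; (2) if $p=(a,b)$ and $q=(a,c)$ (with $a,b,c$ distinct), then: - if $a<b<c$ or $a>b>c$, then $s=(b,c)$ and $t=(a,b)$; - if $a<c<b$ or $a>c>b$, then $s=(a,c)$ and $t=(b,c)$; - if $b<a<c$ or $b>a>c$, then: if $u^{-1}(b)<u^{-1}(a)<u^{-1}(c)$ or $u^{-1}(c)<u^{-1}(a)<u^{-1}(b)$, then $s=(a,c)$ and $t=(b,c)$; otherwise $s=(b,c)$ and $t=(a,b)$.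
   Context: $\mathfrak S_n$ is the symmetric group on $[n]$, $T$ its set of transpositions, $\ell$ the length w.r.t. simple transpositions $(i,i+1)$. The Bruhat graph $B(\mathfrak S_n)$ is the edge-labelled directed graph on $\mathfrak S_n$ with an edge $x\xrightarrow{t}y$ iff $yx^{-1}=t\in T$ and $\ell(x)<\ell(y)$. For any $x,y\in\mathfrak S_n$ the number of paths of length $2$ from $x$ to $y$ in $B(\mathfrak S_n)$ is $0$ or $2$; if $\Gamma$ is one of two such paths, the other one is called the flip of $\Gamma$. $u^{-1}$ is the inverse permutation. *)

(* Symmetric group S_n = 'S_n = {perm 'I_n}; [n] = {1..n}
   is modelled by 'I_n = {0..n-1} with the same (order-preserving) ordering. *)
From mathcomp Require Import all_boot all_fingroup.
Set Implicit Arguments. Unset Strict Implicit. Unset Printing Implicit Defensive.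
Local Open Scope group_scope.

Definition is_transp (n : nat) (t : 'S_n) : Prop :=
  exists a b : 'I_n, a != b /\ t = tperm a b.

Definition is_simple (n : nat) (s : 'S_n) : bool :=
  [exists i : 'I_n, exists j : 'I_n, (val j == (val i).+1) && (s == tperm i j)].

Definition word_of_length (n : nat) (x : 'S_n) (k : nat) : bool :=
  [exists w : k.-tuple 'S_n, all (@is_simple n) w && (\prod_(s <- w) s == x)].

(* length w.r.t. simple transpositions: the least k such that x is a product
   of k simple transpositions (every x has such a word of length
   <= n(n-1)/2 <= n*n, so the search below never falls through). *)
Definition len (n : nat) (x : 'S_n) : nat :=
  find (word_of_length x) (iota 0 (n * n).+1).

(* Bruhat graph edge x --t--> y : y x^{-1} = t in T and len x < len y.
   y x^{-1} = t as functions means y = t o x, i.e. y i = t (x i). *)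
Definition bruhat_edge (n : nat) (x t y : 'S_n) : Prop :=
  is_transp t /\ (forall i, y i = t (x i)) /\ len x < len y.

From mathcomp Require Import all_boot all_fingroup zify.
Set Implicit Arguments. Unset Strict Implicit. Unset Printing Implicit Defensive.
Local Open Scope group_scope.

(* The Coxeter length of a permutation is its number of inversions; hence
   every edge w --(c d)--> w' satisfies (c < d) = (w^-1 c < w^-1 d), i.e. it
   swaps two values appearing in increasing order in w.  Both paths from u to v spell
   the same product u^-1 v = p q = s t of two transpositions.  If p and q
   commute, p q is a product of two disjoint transpositions and its only other
   factorization is q p.  If p = (a b) and q = (a c), p q is a 3-cycle, whose
   factorizations are (a b)(a c) = (b c)(a b) = (a c)(b c); which of the last
   two is the flip is forced by comparing a, b, c with u^-1 a, u^-1 b, u^-1 c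
   along the four edges. *)

Section TranspositionProducts.
Variable T : finType.
Implicit Types a b c d e f g h k : T.

Lemma tperm_moved a b k : tperm a b k != k -> (k == a) || (k == b).
Proof.
by apply: contraR; rewrite negb_or => /andP[ka kb]; rewrite tpermD // eq_sym.
Qed.

Lemma tperm_at_moved a b k :
  (k == a) || (k == b) -> tperm k (tperm a b k) = tperm a b.
Proof. by case/orP=> /eqP->; rewrite ?tpermL ?tpermR // tpermC. Qed.

Lemma tperm_mul_moved e f g h :
  e != f -> tperm e f * tperm g h != 1 -> (tperm e f * tperm g h) e != e.
Proof.
move=> ef; apply: contraNN; rewrite permM tpermL => /eqP ghf.
suff -> : tperm g h = tperm e f by rewrite tperm2.
rewrite [tperm e f]tpermC -ghf tperm_at_moved //.
by apply: tperm_moved; rewrite ghf.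
Qed.

Lemma commute_tperm_fix a b c d k : a != b -> tperm a b != tperm c d ->
  commute (tperm a b) (tperm c d) -> (k == a) || (k == b) -> tperm c d k = k.
Proof.
move=> ab pq cpq; wlog -> : a b ab pq cpq / k = a.
  move=> H /orP[/eqP ka | /eqP kb]; first by apply: (H a b); rewrite ?ka ?eqxx.
  rewrite tpermC in pq cpq; rewrite eq_sym in ab.
  by apply: (H b a); rewrite ?kb ?eqxx.
move=> _; case: (eqVneq (tperm c d a) a) => // qa; case/negP: pq.
have qE : tperm c d = tperm a (tperm c d a).
  by rewrite tperm_at_moved //; apply: tperm_moved.
set m := tperm c d a in qa qE *.
move: cpq => /permP/(_ a); rewrite !permM tpermL -/m.
have [mb | mb] := eqVneq m b; first by rewrite qE mb.
rewrite [tperm a b m]tpermD 1?eq_sym // => /perm_inj ba.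
by rewrite ba eqxx in ab.
Qed.

Lemma tperm_mul_commute_factor a b c d e f g h :
  a != b -> e != f -> commute (tperm a b) (tperm c d) ->
  tperm a b * tperm c d != 1 -> tperm a b * tperm c d = tperm e f * tperm g h ->
  tperm e f != tperm a b -> tperm e f = tperm c d /\ tperm g h = tperm a b.
Proof.
move=> ab ef cpq pq1 E sp.
have pq : tperm a b != tperm c d by apply: contraNneq pq1 => ->; rewrite tperm2.
have st : tperm e f != tperm g h by apply: contraNneq pq1 => st; rewrite E st tperm2.
(* (a b)(c d) is an involution, so (e f)(g h) equals its inverse (g h)(e f) *)
have cst : commute (tperm e f) (tperm g h).
  by have := congr1 (fun r => r^-1) E; rewrite !invMg !tpermV -cpq E.
have tf : tperm g h f = f.
  by apply: (commute_tperm_fix ef st cst); rewrite eqxx orbT.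
have pqe : (tperm a b * tperm c d) e = f by rewrite E permM tpermL tf.
have [eab | eab] := boolP ((e == a) || (e == b)).
  have pe : (tperm a b e == a) || (tperm a b e == b).
    by case/orP: eab => /eqP->; rewrite ?tpermL ?tpermR eqxx ?orbT.
  move: pqe; rewrite permM (commute_tperm_fix ab pq cpq pe) => pef.
  by rewrite -pef tperm_at_moved ?eqxx in sp.
move: eab pqe; rewrite negb_or ![e == _]eq_sym => /andP[ae be].
rewrite permM [tperm a b e]tpermD // => qef.
have sq : tperm e f = tperm c d.
  by rewrite -qef tperm_at_moved //; apply: tperm_moved; rewrite qef eq_sym.
by split=> //; apply: (mulgI (tperm e f)); rewrite -E sq cpq.
Qed.

Lemma tperm_mul_shared a b c :
  a != c -> b != c -> tperm a b * tperm a c = tperm b c * tperm a b.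
Proof.
by move=> ac bc; rewrite -(tpermJ_tperm ac bc) conjgE tpermV -!mulgA tperm2 mulg1.
Qed.

Lemma tperm_mul_3cycle_factor a b c e f g h :
  a != b -> a != c -> b != c -> e != f ->
  tperm a b * tperm a c = tperm e f * tperm g h -> tperm e f != tperm a b ->
  (tperm e f = tperm b c /\ tperm g h = tperm a b) \/
  (tperm e f = tperm a c /\ tperm g h = tperm b c).
Proof.
move=> ab ac bc ef E sp.
have pq1 : tperm a b * tperm a c != 1.
  apply/eqP => /permP/(_ a); rewrite permM perm1 tpermL tpermD ?(eq_sym c) // => ba.
  by rewrite ba eqxx in ab.
have supp k : (tperm a b * tperm a c) k != k -> [|| k == a, k == b | k == c].
  apply: contraR; rewrite !negb_or ![k == _]eq_sym => /and3P[ak bk ck].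
  by rewrite permM !tpermD.
have He : [|| e == a, e == b | e == c].
  by apply/supp; rewrite E; apply: tperm_mul_moved; rewrite -?E.
have Hf : [|| f == a, f == b | f == c].
  apply/supp; rewrite E tpermC; apply: tperm_mul_moved; first by rewrite eq_sym.
  by rewrite tpermC -E.
have -> : tperm g h = tperm e f * (tperm a b * tperm a c) by rewrite E tpermKg.
have pq_bc : tperm a b * tperm a c = tperm b c * tperm a b.
  by rewrite tperm_mul_shared.
have pq_ac : tperm a b * tperm a c = tperm a c * tperm b c.
  by rewrite [tperm a c]tpermC [tperm b c]tpermC tperm_mul_shared // eq_sym.
move: ef sp; case/or3P: He => /eqP->; case/or3P: Hf => /eqP->; rewrite ?eqxx //;
  rewrite ?[tperm b a]tpermC ?[tperm c a]tpermC ?[tperm c b]tpermC ?eqxx // => _ _;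
  by [left; rewrite pq_bc tpermKg | right; rewrite pq_ac tpermKg].
Qed.

End TranspositionProducts.

Section Inversions.
Variable n : nat.
Implicit Types (w x : 'S_n) (i j k l : 'I_n).

Definition inversions w : {set 'I_n * 'I_n} :=
  [set kl : 'I_n * 'I_n | (kl.1 < kl.2)%N && (w kl.2 < w kl.1)%N].

Definition ninv w := #|inversions w|.

Lemma inversionsE w k l : ((k, l) \in inversions w) = (k < l)%N && (w l < w k)%N.
Proof. by rewrite inE. Qed.

Lemma ninv1 : ninv 1 = 0.
Proof.
apply/eqP; rewrite cards_eq0; apply/eqP/setP => -[k l].
rewrite inversionsE !perm1 in_set0.
by apply/negbTE/andP => -[kl /(ltn_trans kl)]; rewrite ltnn.
Qed.

Lemma val_tperm i j k :
  tperm i j k = (if k == i :> nat then j else if k == j :> nat then i else k) :> nat.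
Proof.
rewrite !val_eqE.
case: tpermP => [->|->|/eqP/negbTE-> /eqP/negbTE->] //; rewrite eqxx //.
by have [->|] := eqVneq j i.
Qed.

Lemma tperm_adj_ltn i j k l : j = i.+1 :> nat -> (k < l)%N -> (k, l) != (i, j) ->
  (tperm i j k < tperm i j l)%N.
Proof. by rewrite xpair_eqE -!val_eqE /= !val_tperm; repeat case: eqP; lia. Qed.

Lemma ninvV w : ninv w^-1 = ninv w.
Proof.
have le_inv x : (ninv x <= ninv x^-1)%N.
  have inj : injective (fun kl : 'I_n * 'I_n => (x kl.2, x kl.1)).
    by move=> [k l] [k' l'] [/perm_inj-> /perm_inj->].
  rewrite /ninv -(card_imset _ inj); apply/subset_leq_card/subsetP => z.
  case/imsetP=> -[k l] klx ->.
  by rewrite inversionsE /= !permK andbC -inversionsE.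
by apply/eqP; rewrite eqn_leq le_inv -{2}[w]invgK le_inv.
Qed.

Lemma ninv_adj_le w i j :
  j = i.+1 :> nat -> (ninv (tperm i j * w) <= (ninv w).+1)%N.
Proof.
move=> ji; pose f (kl : 'I_n * 'I_n) := (tperm i j kl.1, tperm i j kl.2).
have inj : injective f by move=> [k l] [k' l'] [/perm_inj-> /perm_inj->].
have sub : f @: (inversions (tperm i j * w) :\ (i, j)) \subset inversions w :\ (i, j).
  apply/subsetP => z /imsetP[[k l]]; rewrite in_setD1 inversionsE !permM /=.
  case/and3P=> ne kl wlk ->; rewrite in_setD1 inversionsE /= wlk tperm_adj_ltn //.
  rewrite /f /= xpair_eqE !andbT; apply/negP => /andP[/eqP tk /eqP tl].
  have kj : k = j by rewrite -(tpermK i j k) tk tpermL.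
  have li : l = i by rewrite -(tpermK i j l) tl tpermR.
  by move: kl; rewrite kj li ji ltnNge leqnSn.
rewrite /ninv (cardsD1 (i, j)) -add1n leq_add ?leq_b1 // -(card_imset _ inj).
exact: leq_trans (subset_leq_card sub) (subset_leq_card (subsetDl _ _)).
Qed.

Lemma ninv_tperm_lt w i j :
  (i < j)%N -> (w i < w j)%N -> (ninv w < ninv (tperm i j * w))%N.
Proof.
move=> ij wij; set t := tperm i j.
(* an inversion (k, l) of w gives the inversion (t k, t l) of t * w if t keeps
   k, l in order, and (k, l) itself otherwise; (i, j) is a new inversion *)
pose f (kl : 'I_n * 'I_n) := if (t kl.1 < t kl.2)%N then (t kl.1, t kl.2) else kl.
have inj : {in inversions w &, injective f}.
  move=> [k l] [k' l']; rewrite !inversionsE /f /= => /andP[kl _] /andP[kl' _].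
  case: ifP => tkl; case: ifP => tkl' // [ek el].
  - by rewrite (perm_inj ek) (perm_inj el).
  - by move: tkl'; rewrite -ek -el !tpermK kl.
  - by move: tkl; rewrite ek el !tpermK kl'.
have sub : f @: inversions w \subset inversions (t * w) :\ (i, j).
  apply/subsetP => z /imsetP[[k l]]; rewrite inversionsE /f /= => /andP[kl wlk] ->.
  rewrite in_setD1; case: ifP => tkl; rewrite inversionsE !permM /=.
    rewrite !tpermK wlk tkl xpair_eqE !andbT; apply/negP => /andP[/eqP tk /eqP tl].
    have kj : k = j by rewrite -(tpermK i j k) tk tpermL.
    have li : l = i by rewrite -(tpermK i j l) tl tpermR.
    by move: kl; rewrite kj li ltnNge ltnW.
  have -> : (k, l) != (i, j).
    by apply: contraTneq wlk => -[-> ->]; rewrite -leqNgt ltnW.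
  rewrite kl /=; move: tkl kl wlk; rewrite /t.
  by case: tpermP => [->|->|_ _]; case: tpermP => [->|->|_ _]; lia.
rewrite /ninv -(card_in_imset inj) (cardsD1 (i, j) (inversions _)) inversionsE.
by rewrite !permM /t tpermL tpermR ij wij add1n ltnS subset_leq_card.
Qed.

Lemma ninv_prod_simple (ws : seq 'S_n) :
  all (@is_simple n) ws -> (ninv (\prod_(s <- ws) s) <= size ws)%N.
Proof.
elim: ws => [|s ws IH]; first by rewrite big_nil ninv1.
rewrite big_cons /= => /andP[/existsP[i /existsP[j /andP[/eqP ji /eqP->]]] /IH le_ws].
by apply: leq_trans (ninv_adj_le _ ji) _; rewrite ltnS.
Qed.

Lemma ninv_le_word x m : word_of_length x m -> (ninv x <= m)%N.
Proof.
by case/existsP=> ws /andP[/ninv_prod_simple + /eqP <-]; rewrite size_tuple.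
Qed.

Lemma adj_increasing_ge (f : 'I_n -> 'I_n) :
  (forall i j, j = i.+1 :> nat -> (f i < f j)%N) -> forall k, (k <= f k)%N.
Proof.
move=> incf [m]; elim: m => [//|m IH] km.
have := IH (ltnW km); have := incf (Ordinal (ltnW km)) (Ordinal km) erefl => /=; lia.
Qed.

Lemma adj_increasing_perm1 x :
  (forall i j, j = i.+1 :> nat -> (x i < x j)%N) -> x = 1.
Proof.
move=> incx; apply/permP => k; apply/val_inj/eqP.
rewrite perm1 eqn_leq (adj_increasing_ge incx) andbT.
(* applied to k |-> rev (x (rev k)), also increasing, the bound gives x k <= k *)
have incr i j : j = i.+1 :> nat ->
    (rev_ord (x (rev_ord i)) < rev_ord (x (rev_ord j)))%N.
  move=> ji; have := incx (rev_ord j) (rev_ord i); rewrite /= ji.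
  have := ltn_ord j; have := ltn_ord (x (rev_ord i)); have := ltn_ord (x (rev_ord j)).
  lia.
have := adj_increasing_ge incr (rev_ord k); rewrite /= rev_ordK.
have := ltn_ord k; have := ltn_ord (x k); lia.
Qed.

Lemma perm1_or_descent x :
  x = 1 \/ exists i j, j = i.+1 :> nat /\ (x j < x i)%N.
Proof.
have [/existsP[i /existsP[j /andP[/eqP ji xji]]] | nodesc] :=
  boolP [exists i : 'I_n, exists j : 'I_n, (j == i.+1 :> nat) && (x j < x i)%N].
  by right; exists i, j.
left; apply: adj_increasing_perm1 => i j ji.
move: nodesc; rewrite negb_exists => /forallP/(_ i); rewrite negb_exists.
move=> /forallP/(_ j); rewrite ji eqxx /= -leqNgt leq_eqVlt => /orP[/eqP xij | //].
have /perm_inj ij : x i = x j by apply: val_inj.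
by move: ji; rewrite ij => /n_Sn.
Qed.

Lemma word_of_length_ninv x : word_of_length x (ninv x).
Proof.
have [m] := ubnP (ninv x); elim: m x => // m IH x lt_xm.
have [-> | [i [j [ji xji]]]] := perm1_or_descent x.
  by rewrite ninv1; apply/existsP; exists [tuple]; rewrite /= big_nil.
set y := tperm i j * x; have xE : x = tperm i j * y by rewrite tpermKg.
have ij : (i < j)%N by rewrite ji.
have lt_yx : (ninv y < ninv x)%N.
  by rewrite xE ninv_tperm_lt // /y !permM tpermL tpermR.
have -> : ninv x = (ninv y).+1 by apply/eqP; rewrite eqn_leq {1}xE ninv_adj_le.
have /existsP[ws /andP[simple_ws /eqP prod_ws]] := IH y (leq_trans lt_yx lt_xm).
apply/existsP; exists [tuple of tperm i j :: ws].
rewrite /= big_cons prod_ws -xE eqxx simple_ws !andbT.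
by apply/existsP; exists i; apply/existsP; exists j; rewrite /= ji !eqxx.
Qed.

Lemma lenE x : len x = ninv x.
Proof.
rewrite /len; set N := (n * n).+1.
have lt_xN : (ninv x < N)%N.
  by rewrite ltnS /ninv (leq_trans (max_card _)) // card_prod card_ord.
have has_x : has (word_of_length x) (iota 0 N).
  by apply/hasP; exists (ninv x); rewrite ?mem_iota ?word_of_length_ninv.
apply/eqP; rewrite eqn_leq; apply/andP; split.
  rewrite leqNgt; apply/negP => /(before_find 0).
  by rewrite nth_iota // add0n word_of_length_ninv.
have := nth_find 0 has_x; rewrite nth_iota ?add0n; first exact: ninv_le_word.
by rewrite -{2}(size_iota 0 N) -has_find.
Qed.

End Inversions.

Section BruhatEdges.
Variable n : nat.
Implicit Types (u w x v t : 'S_n) (a b c d : 'I_n).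

Lemma bruhat_edge_mulr w t (w' : 'S_n) : bruhat_edge w t w' -> w' = w * t.
Proof. by case=> _ [w'E _]; apply/permP => k; rewrite permM w'E. Qed.

Lemma bruhat_edge_inv_ltn w (w' : 'S_n) c d :
  bruhat_edge w (tperm c d) w' -> (c < d)%N -> (w^-1 c < w^-1 d)%N.
Proof.
move=> e cd; have w'V : w'^-1 = tperm c d * w^-1.
  by rewrite (bruhat_edge_mulr e) invMg tpermV.
case: e => _ [_]; rewrite !lenE -ninvV -[ninv w']ninvV; apply: contraTT.
rewrite -leqNgt leq_eqVlt => /orP[/eqP/val_inj/perm_inj dc | dc].
  by rewrite dc ltnn in cd.
rewrite -leqNgt ltnW // -(tpermKg c d w^-1) -w'V.
by apply: ninv_tperm_lt cd _; rewrite w'V !permM tpermL tpermR.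
Qed.

Lemma bruhat_edge_tpermE w (w' : 'S_n) c d :
  bruhat_edge w (tperm c d) w' -> c != d -> (c < d)%N = (w^-1 c < w^-1 d)%N.
Proof.
move=> e cd; case: ltngtP => [lt_cd | lt_dc | eq_cd].
- by rewrite (bruhat_edge_inv_ltn e lt_cd).
- by rewrite tpermC in e; have /ltnW/leq_gtF-> := bruhat_edge_inv_ltn e lt_dc.
- by rewrite (val_inj eq_cd) eqxx in cd.
Qed.

Lemma bruhat_path2_tpermE u x v a b c d :
  bruhat_edge u (tperm a b) x -> bruhat_edge x (tperm c d) v -> a != b -> c != d ->
  (a < b)%N = (u^-1 a < u^-1 b)%N /\
  (c < d)%N = (u^-1 (tperm a b c) < u^-1 (tperm a b d))%N.
Proof.
move=> e1 e2 ab cd; split; first exact: bruhat_edge_tpermE e1 ab.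
by rewrite (bruhat_edge_tpermE e2 cd) (bruhat_edge_mulr e1) invMg tpermV !permM.
Qed.

End BruhatEdges.

Section Flip.
Variables (n : nat) (u x y v p q s t : 'S_n).
Hypotheses (e_up : bruhat_edge u p x) (e_qv : bruhat_edge x q v).
Hypotheses (e_us : bruhat_edge u s y) (e_tv : bruhat_edge y t v) (yx : y <> x).

Lemma flip_mul : p * q = s * t.
Proof.
apply: (mulgI u); rewrite !mulgA -(bruhat_edge_mulr e_up) -(bruhat_edge_mulr e_us).
by rewrite -(bruhat_edge_mulr e_qv) -(bruhat_edge_mulr e_tv).
Qed.

Lemma flip_mul_neq1 : p * q != 1.
Proof.
apply/eqP => pq1; have := ltn_trans e_up.2.2 e_qv.2.2.
by rewrite (bruhat_edge_mulr e_qv) (bruhat_edge_mulr e_up) -mulgA pq1 mulg1 ltnn.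
Qed.

Lemma flip_neq : s != p.
Proof.
apply/eqP => sp; apply: yx.
by rewrite (bruhat_edge_mulr e_us) (bruhat_edge_mulr e_up) sp.
Qed.

Lemma flip_commute : commute p q -> s = q /\ t = p.
Proof.
have [[a [b [ab pE]]] [c [d [_ qE]]]] := (e_up.1, e_qv.1).
have [[e [f [ef sE]]] [g [h [_ tE]]]] := (e_us.1, e_tv.1).
have := flip_mul_neq1; have := flip_neq; have := flip_mul.
rewrite pE qE sE tE => pq_st sp pq1 cpq.
exact: tperm_mul_commute_factor.
Qed.

End Flip.

Theorem proposition3p6 (n : nat) (u x y v p q s t : 'S_n) :
  bruhat_edge u p x -> bruhat_edge x q v ->
  bruhat_edge u s y -> bruhat_edge y t v -> y <> x ->
  ((p * q = q * p)%g -> s = q /\ t = p) /\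
  (forall a b c : 'I_n, a != b -> a != c -> b != c ->
     p = tperm a b -> q = tperm a c ->
     (((a < b < c)%N \/ (c < b < a)%N) -> s = tperm b c /\ t = tperm a b) /\
     (((a < c < b)%N \/ (b < c < a)%N) -> s = tperm a c /\ t = tperm b c) /\
     (((b < a < c)%N \/ (c < a < b)%N) ->
        (((((u^-1)%g b < (u^-1)%g a < (u^-1)%g c)%N \/
           ((u^-1)%g c < (u^-1)%g a < (u^-1)%g b)%N) ->
            s = tperm a c /\ t = tperm b c) /\
         (~ (((u^-1)%g b < (u^-1)%g a < (u^-1)%g c)%N \/
             ((u^-1)%g c < (u^-1)%g a < (u^-1)%g b)%N) ->
            s = tperm b c /\ t = tperm a b)))).
Proof.
move=> e_up e_qv e_us e_tv yx.
split; first exact: (flip_commute e_up e_qv e_us e_tv yx).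
move=> a b c ab ac bc pE qE.
have [[e [f [ef sE]]] [g [h [_ tE]]]] := (e_us.1, e_tv.1).
have := flip_neq e_up e_us yx; have := flip_mul e_up e_qv e_us e_tv.
rewrite pE qE sE tE => pq_st sp.
rewrite pE qE in e_up e_qv; rewrite sE tE in e_us e_tv.
have P_inj i j : i != j -> u^-1 i != u^-1 j :> nat.
  by rewrite val_eqE (inj_eq perm_inj).
move: (P_inj _ _ ab) (P_inj _ _ ac) (P_inj _ _ bc) => Pab Pac Pbc.
have [o1 o2] := bruhat_path2_tpermE e_up e_qv ab ac.
rewrite tpermL tpermD // in o2.
have [[sbc tab] | [sac tbc]] := tperm_mul_3cycle_factor ab ac bc ef pq_st sp.
- rewrite sbc tab in e_us e_tv *; have [o3 o4] := bruhat_path2_tpermE e_us e_tv bc ab.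
  rewrite tpermL tpermD ?(eq_sym b) ?(eq_sym c) // in o4.
  by do ![split | move=> ?]; exfalso; lia.
- rewrite sac tbc in e_us e_tv *; have [o3 o4] := bruhat_path2_tpermE e_us e_tv ac bc.
  rewrite tpermR tpermD ?(eq_sym c) // in o4.
  by do ![split | move=> ?]; exfalso; lia.
Qed.
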